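(* Let $n\ge1$, $i,j\ge0$, and let $K$ be a finite ordered simplicial complex that is an $n$-pseudomanifold along $(\widehat{d_i},\widehat{d_j})$, with or without boundary. Let $\mathcal G$ be the subgraph of the $(n-1,\widehat{d_i},\widehat{d_j})$-graph of $K$ induced by the $n$-simplices. Then the directed flag complex of $\mathcal G$ has no simplices of dimension $\ge2$ (i.e. it has dimension at most $1$).
   Context: An ordered simplicial complex on a vertex set $V$ is a finite collection of non-empty finite tuples of pairwise distinct elements of $V$ closed under taking non-empty subsequences; $\dim(v_0,\dots,v_n)=n$. $\alpha\hookrightarrow\sigma$ means $\alpha$ is a non-empty subsequence of $\sigma$ (every simplex is a face of itself); a simplex is maximal if it is a face of no other simplex. For an $n$-simplex $\sigma=(v_0,\dots,v_n)$, $\widehat{d_i}(\sigma)$ is obtained by deleting $v_i$ if $i<n$ and deleting $v_n$ if $i\ge n$. For $\sigma,\tau$ of dimension $\ge q$, $(\sigma,\tau)$ is $q$-near along $(\widehat{d_i},\widehat{d_j})$ if $\sigma\hookrightarrow\tau$ or there is a $q$-simplex $\alpha\in K$ with $\alpha\hookrightarrow\widehat{d_i}(\sigma)$ and $\alpha\hookrightarrow\widehat{d_j}(\tau)$; $(\sigma,\tau)$ is $q$-connected along $(\widehat{d_i},\widehat{d_j})$ if there is a finite sequence from $\sigma$ to $\tau$ whose consecutive ordered pairs are $q$-near along $(\widehat{d_i},\widehat{d_j})$. The $(q,\widehat{d_i},\widehat{d_j})$-graph of $K$ is the directed graph with vertex set the simplices of dimension $\ge q$ and a directed edge $(\sigma,\tau)$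 for every ordered pair $\sigma\neq\tau$ that is $q$-near along $(\widehat{d_i},\widehat{d_j})$. $K$ is an $n$-pseudomanifold along $(\widehat{d_i},\widehat{d_j})$ if all maximal simplices are $n$-simplices, each $(n-1)$-simplex is a face of exactly two $n$-simplices, and any two $n$-simplices are $(n-1)$-connected along $(\widehat{d_i},\widehat{d_j})$; ''with boundary'' means the same with ''exactly two'' replaced by ''at most two''. The directed flag complex of a directed graph (without loops, reciprocal edges allowed) is the ordered simplicial complex whose $k$-simplices are the tuples $(x_0,\dots,x_k)$ of distinct vertices such that $(x_a,x_b)$ is an edge for all $a<b$. *)

From mathcomp Require Import all_boot all_order.
Set Implicit Arguments. Unset Strict Implicit. Unset Printing Implicit Defensive.

Definition sdim (T : Type) (s : seq T) : nat := (size s).-1.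

Section OrderedComplex.
Variable V : eqType.

(* A finite ordered simplicial complex is given by the finite list of its
   simplices (duplicates are irrelevant; only membership matters). *)
Definition complex := seq (seq V).


Definition face (a s : seq V) : bool := (a != [::]) && subseq a s.

Definition is_ordered_complex (K : complex) : Prop :=
  (forall s, s \in K -> (s != [::]) && uniq s) /\
  (forall s a, s \in K -> face a s -> a \in K).

Definition dhat (i : nat) (s : seq V) : seq V :=
  let k := minn i (sdim s) in take k s ++ drop k.+1 s.

Definition qnear (K : complex) (q i j : nat) (s t : seq V) : bool :=
  face s t ||
  has (fun a => (sdim a == q) && face a (dhat i s) && face a (dhat j t)) K.

Definition qconnected (K : complex) (q i j : nat) (s t : seq V) : Prop :=
  exists p : seq (seq V),
    all (fun x => (x \in K) && (q <= sdim x)) p /\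
    path (qnear K q i j) s p /\ last s p = t.

Definition maximal (K : complex) (s : seq V) : Prop :=
  s \in K /\ forall t, t \in K -> face s t -> t = s.

Definition ncofaces (K : complex) (n : nat) (r : seq V) : nat :=
  size (undup [seq t <- K | (sdim t == n) && face r t]).

Definition pseudomanifold (K : complex) (n i j : nat) : Prop :=
  (forall s, maximal K s -> sdim s = n) /\
  (forall r, r \in K -> sdim r = n.-1 -> ncofaces K n r = 2) /\
  (forall s t, s \in K -> t \in K -> sdim s = n -> sdim t = n ->
     qconnected K n.-1 i j s t).

Definition pseudomanifold_with_boundary (K : complex) (n i j : nat) : Prop :=
  (forall s, maximal K s -> sdim s = n) /\
  (forall r, r \in K -> sdim r = n.-1 -> ncofaces K n r <= 2) /\
  (forall s t, s \in K -> t \in K -> sdim s = n -> sdim t = n ->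
     qconnected K n.-1 i j s t).

(* Directed graphs on vertex type W: a vertex predicate and an edge relation
   (edge relation assumed irreflexive / restricted to vertices by construction). *)
Record dgraph (W : eqType) := DGraph { dvert : pred W; dedge : rel W }.

Definition dflag_simplex (W : eqType) (G : dgraph W) (xs : seq W) : bool :=
  (xs != [::]) && all (dvert G) xs && uniq xs && pairwise (dedge G) xs.

Definition qgraph (K : complex) (q i j : nat) : dgraph (seq V) :=
  DGraph (fun s => (s \in K) && (q <= sdim s))
         (fun s t => [&& s \in K, t \in K, q <= sdim s, q <= sdim t,
                         s != t & qnear K q i j s t]).

Definition induced (W : eqType) (G : dgraph W) (P : pred W) : dgraph W :=
  DGraph (fun x => dvert G x && P x) (fun x y => [&& P x, P y & dedge G x y]).

End OrderedComplex.

(* Two distinct n-simplices that are (n-1)-near share the (n-1)-face witnessing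
   nearness, and since this face has the size of both dhat i s and dhat j t it
   must equal both of them: every edge s -> t of the graph satisfies
   dhat i s = dhat j t.  In a 2-simplex (x0, x1, x2) of the flag complex the
   edges x0 -> x1 and x0 -> x2 therefore make dhat i x0 a common (n-1)-face of
   three distinct n-simplices, which a pseudomanifold (with or without
   boundary) forbids. *)

From mathcomp Require Import all_boot.
From mathcomp Require Import zify.
Set Implicit Arguments. Unset Strict Implicit.

Section Faces.
Variable V : eqType.

Lemma dhat_subseq k (s : seq V) : subseq (dhat k s) s.
Proof.
rewrite /dhat; set m := minn _ _.
rewrite -{3}(cat_take_drop m s); apply: cat_subseq; first exact: subseq_refl.
by rewrite -addn1 addnC -drop_drop; apply: drop_subseq.
Qed.

Lemma size_dhat k (s : seq V) : 0 < size s -> size (dhat k s) = (size s).-1.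
Proof.
move=> s_gt0; rewrite /dhat /sdim size_cat size_take size_drop.
have -> : minn k (size s).-1 < size s by lia.
lia.
Qed.

Lemma sdim_dhat k (s : seq V) : 0 < sdim s -> sdim (dhat k s) = (sdim s).-1.
Proof. by rewrite /sdim => s_gt0; rewrite size_dhat; lia. Qed.

Lemma face_dhat k (s : seq V) : 0 < sdim s -> face (dhat k s) s.
Proof.
rewrite /face /sdim dhat_subseq andbT -size_eq0 => s_gt0.
by rewrite size_dhat; lia.
Qed.

Lemma subseq_size_eq (a b : seq V) : subseq a b -> size a = size b -> a = b.
Proof.
by move=> /size_subseq_leqif [_ eq_ab] size_ab; apply/eqP; rewrite -eq_ab size_ab.
Qed.

Lemma qnear_dhat_eq (K : complex V) q i j (s t : seq V) :
  sdim s = q.+1 -> sdim t = q.+1 -> s != t ->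
  qnear K q i j s t -> dhat i s = dhat j t.
Proof.
rewrite /sdim => ds dt s_neq_t.
case/orP => [/andP [_ sub_st]|/hasP [a _ /andP [/andP [/eqP da]]]].
  by move: s_neq_t; rewrite (subseq_size_eq sub_st) ?eqxx //; lia.
move=> /andP [a_nil sub_as] /andP [_ sub_at].
have size_a : size a = q.+1.
  by move: da a_nil; rewrite /sdim; case: a {sub_as sub_at} => //= x l <-.
rewrite -(subseq_size_eq sub_as); last by rewrite size_dhat; lia.
by rewrite (subseq_size_eq sub_at) // size_dhat; lia.
Qed.

Lemma ncofaces_ge (K : complex V) n (r : seq V) (ts : seq (seq V)) :
  uniq ts -> (forall t, t \in ts -> [/\ t \in K, sdim t = n & face r t]) ->
  size ts <= ncofaces K n r.
Proof.
move=> uniq_ts cof_ts; apply: uniq_leq_size => // t /cof_ts [tK dt rt].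
by rewrite mem_undup mem_filter tK dt eqxx rt.
Qed.

Lemma pseudomanifold_ncofaces_le2 (K : complex V) n i j (r : seq V) :
  pseudomanifold K n i j \/ pseudomanifold_with_boundary K n i j ->
  r \in K -> sdim r = n.-1 -> ncofaces K n r <= 2.
Proof. by case=> [[_ [cof2 _]]|[_ [cof_le2 _]]] rK dr; rewrite ?cof2 ?cof_le2. Qed.

End Faces.

Theorem proposition4 (V : eqType) (K : complex V) (n i j : nat) :
  1 <= n ->
  is_ordered_complex K ->
  (pseudomanifold K n i j \/ pseudomanifold_with_boundary K n i j) ->
  forall xs : seq (seq V),
    dflag_simplex (induced (qgraph K n.-1 i j) (fun s => sdim s == n)) xs ->
    sdim xs < 2.
Proof.
case: n => // m _ [_ K_closed] hpm [|x0 [|x1 [|x2 xs]]] //.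
rewrite /dflag_simplex /= => /and3P [/and5P [/and4P [/andP [/andP [x0K _] /eqP d0]
  /andP [/andP [x1K _] /eqP d1] /andP [/andP [x2K _] /eqP d2] _] x0_fresh x1_fresh _ _]
  /and3P [/and5P [_ _ _ _ /and4P [_ _ x01 near01]]
          /and5P [_ _ _ _ /and4P [_ _ x02 near02]] _] _].
have e1 := qnear_dhat_eq d0 d1 x01 near01.
have e2 := qnear_dhat_eq d0 d2 x02 near02.
have r0 : face (dhat i x0) x0 by rewrite face_dhat ?d0.
have rK : dhat i x0 \in K := K_closed _ _ x0K r0.
have dr : sdim (dhat i x0) = m by rewrite sdim_dhat d0.
suff : size [:: x0; x1; x2] <= ncofaces K m.+1 (dhat i x0).
  by move/leq_trans/(_ (pseudomanifold_ncofaces_le2 hpm rK dr)).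
apply: ncofaces_ge.
  by move: x0_fresh x1_fresh; rewrite /= !inE !negb_or => /and3P [-> -> _] /andP [-> _].
move=> t; rewrite !inE => /or3P [] /eqP -> //.
- by rewrite e1; split => //; rewrite face_dhat ?d1.
- by rewrite e2; split => //; rewrite face_dhat ?d2.
Qed.
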